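(* Let $(W,S)$ be a Coxeter system with $S$ finite, $\phi:\operatorname{Ad}(Q_W)\to W$ the homomorphism $e_x\mapsto x$, and $C_W=\ker\phi$. Then the rank of the abelian group $C_W$ (i.e. $\dim_{\mathbb{Q}}(C_W\otimes\mathbb{Q})$) equals $c(W)$, the number of $W$-conjugacy classes of elements of $Q_W$.
   Context: A Coxeter system $(W,S)$: $S$ finite, $m:S\times S\to\mathbb{N}\cup\{\infty\}$ with $m(s,s)=1$, $2\le m(s,t)=m(t,s)\le\infty$ for $s\ne t$, $W=\langle s\in S\mid (st)^{m(s,t)}=1\ (m(s,t)<\infty)\rangle$. The Coxeter quandle is $Q_W=\bigcup_{w\in W}w^{-1}Sw$ with $x\ast y=yxy$, and $\operatorname{Ad}(Q_W)=\langle e_x\ (x\in Q_W)\mid e_y^{-1}e_xe_y=e_{x\ast y}\rangle$. $C_W$ is a central (hence abelian) subgroup of $\operatorname{Ad}(Q_W)$. *)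

(* Groups given by presentations are modelled as
   words in generators and their inverses, modulo the congruence generated by
   free cancellation and the relators (= quotient of the free group by the
   normal closure of the relators). *)
From mathcomp Require Import all_boot all_algebra.
Set Implicit Arguments. Unset Strict Implicit. Unset Printing Implicit Defensive.

(* a letter (x, false) is the generator x, (x, true) is its inverse x^-1 *)
Definition letter (X : Type) := (X * bool)%type.
Definition word (X : Type) := seq (letter X).

Definition winv {X : Type} (w : word X) : word X :=
  rev (map (fun l : letter X => (l.1, ~~ l.2)) w).

Inductive pres_eq {X : Type} (R : word X -> Prop) : word X -> word X -> Prop :=
| pe_refl w : pres_eq R w w
| pe_sym u v : pres_eq R u v -> pres_eq R v u
| pe_trans u v w : pres_eq R u v -> pres_eq R v w -> pres_eq R u w
| pe_cancel u v x b : pres_eq R (u ++ (x, b) :: (x, ~~ b) :: v) (u ++ v)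
| pe_rel u v r : R r -> pres_eq R (u ++ r ++ v) (u ++ v).

Definition wpow {X : Type} (w : word X) (c : int) : word X :=
  match c with
  | Posz n => flatten (nseq n w)
  | Negz n => flatten (nseq n.+1 (winv w))
  end.

(* Coxeter matrix on a finite set S; convention: m s t = 0 encodes m(s,t) = oo *)
Definition coxeter_matrix (S : finType) (m : S -> S -> nat) : Prop :=
  (forall s, m s s = 1%N) /\ (forall s t, m s t = m t s) /\
  (forall s t, s != t -> m s t != 1%N).

Definition cox_rel (S : finType) (m : S -> S -> nat) (r : word S) : Prop :=
  exists s t, (0 < m s t)%N /\
    r = flatten (nseq (m s t) [:: (s, false); (t, false)]).

Definition W_eq (S : finType) (m : S -> S -> nat) := pres_eq (cox_rel m).

Definition inQ (S : finType) (m : S -> S -> nat) (q : word S) : Prop :=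
  exists (w : word S) (s : S), W_eq m q (winv w ++ (s, false) :: w).

(* generators of Ad(Q_W): elements of Q_W (given by representing words,
   representatives of the same element of W being identified below) *)
Definition Qgen (S : finType) (m : S -> S -> nat) := {q : word S | inQ m q}.

(* relators of Ad(Q_W):
   - e_x e_y^-1 when x = y in W (generators are indexed by elements of Q_W);
   - e_y^-1 e_x e_y e_z^-1 when z = y x y = x * y in W. *)
Definition ad_rel (S : finType) (m : S -> S -> nat) (r : word (Qgen m)) : Prop :=
  (exists x y : Qgen m, W_eq m (proj1_sig x) (proj1_sig y) /\
     r = [:: (x, false); (y, true)]) \/
  (exists x y z : Qgen m, W_eq m (proj1_sig z) (proj1_sig y ++ proj1_sig x ++ proj1_sig y) /\
     r = [:: (y, true); (x, false); (y, false); (z, true)]).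

Definition Ad_eq (S : finType) (m : S -> S -> nat) := pres_eq (ad_rel (m := m)).

Definition phi (S : finType) (m : S -> S -> nat) (u : word (Qgen m)) : word S :=
  flatten (map (fun l : letter (Qgen m) =>
                  if l.2 then winv (proj1_sig l.1) else proj1_sig l.1) u).

Definition inC (S : finType) (m : S -> S -> nat) (u : word (Qgen m)) : Prop :=
  W_eq m (phi u) [::].

Definition C_indep (S : finType) (m : S -> S -> nat) (k : nat)
    (u : 'I_k -> word (Qgen m)) : Prop :=
  (forall i, inC (u i)) /\
  forall c : 'I_k -> int,
    Ad_eq (flatten [seq wpow (u i) (c i) | i <- enum 'I_k]) [::] ->
    forall i, c i = 0%R.

(* rank of C_W equals k: maximal size of a Z-independent family
   (= dim_Q (C_W (x) Q)) *)
Definition C_rank_eq (S : finType) (m : S -> S -> nat) (k : nat) : Prop :=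
  (exists u : 'I_k -> word (Qgen m), C_indep u) /\
  (forall u : 'I_k.+1 -> word (Qgen m), ~ C_indep u).

Definition W_conj (S : finType) (m : S -> S -> nat) (x y : word S) : Prop :=
  exists w : word S, W_eq m y (winv w ++ x ++ w).

Definition num_Q_classes (S : finType) (m : S -> S -> nat) (n : nat) : Prop :=
  exists q : 'I_n -> word S,
    (forall i, inQ m (q i)) /\
    (forall i j, W_conj m (q i) (q j) -> i = j) /\
    (forall x, inQ m x -> exists i, W_conj m (q i) x).

(* The squares e_x^2 are central in Ad(Q_W), and e_s^2 only depends on the
   W-conjugacy class of s in S.  Modulo the subgroup A they generate, the lifts
   e_s of the generators are involutions satisfying the Coxeter relations, and
   e_x becomes the lift of the word x; hence every element of C_W = ker phi lies
   in A, which is generated by c(W) commuting elements, one square per class of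
   reflections, and the rank of C_W is at most c(W).
   Conversely, for each class, the parity of the number of letters of that class
   in a word is invariant in W; counting with signs the generators e_x with odd
   parity gives a homomorphism Ad(Q_W) -> Z which sends the square of the chosen
   representative of that class to 2 and the other representatives' squares to 0,
   so these c(W) squares are independent.  The classes of reflections meeting S
   are the components of the graph on S joining s and t when m(s,t) is odd. *)

From mathcomp Require Import all_boot all_algebra zify.
From Stdlib Require Import Setoid.
Set Implicit Arguments. Unset Strict Implicit. Unset Printing Implicit Defensive.
Import GRing.Theory.

(** * Words and presentations *)

Lemma winv_cat X (u v : word X) : winv (u ++ v) = winv v ++ winv u.
Proof. by rewrite /winv map_cat rev_cat. Qed.

Lemma winv_cons X (l : letter X) (u : word X) :
  winv (l :: u) = winv u ++ [:: (l.1, ~~ l.2)].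
Proof. by rewrite /winv /= rev_cons cats1. Qed.

Lemma winvK X : involutive (@winv X).
Proof.
move=> u; rewrite /winv map_rev revK -map_comp -[RHS]map_id.
by apply: eq_map => -[x b] /=; rewrite negbK.
Qed.

Section Presentation.
Variables (X : Type) (R : word X -> Prop).
Notation "u ~= v" := (pres_eq R u v) (at level 70).

Lemma pres_eq_catl a u v : u ~= v -> a ++ u ~= a ++ v.
Proof.
elim=> [w|u1 v1 _|u1 v1 w1 _ IH1 _ IH2|u1 v1 x b|u1 v1 r Hr].
- exact: pe_refl.
- exact: pe_sym.
- exact: pe_trans IH2.
- by rewrite !catA; apply: pe_cancel.
- by rewrite !catA -(catA (a ++ u1)); apply: pe_rel.
Qed.

Lemma pres_eq_catr b u v : u ~= v -> u ++ b ~= v ++ b.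
Proof.
elim=> [w|u1 v1 _|u1 v1 w1 _ IH1 _ IH2|u1 v1 x c|u1 v1 r Hr].
- exact: pe_refl.
- exact: pe_sym.
- exact: pe_trans IH2.
- by rewrite -!catA /=; apply: pe_cancel.
- by rewrite -!catA; apply: pe_rel.
Qed.

Lemma pres_eq_cat u u' v v' : u ~= u' -> v ~= v' -> u ++ v ~= u' ++ v'.
Proof. by move=> Eu Ev; apply: pe_trans (pres_eq_catr v Eu) (pres_eq_catl u' Ev). Qed.

End Presentation.

Add Parametric Relation X (R : word X -> Prop) : (word X) (pres_eq R)
  reflexivity proved by (@pe_refl X R)
  symmetry proved by (@pe_sym X R)
  transitivity proved by (@pe_trans X R) as pres_eq_rel.

Add Parametric Morphism X (R : word X -> Prop) : (@cat (letter X))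
  with signature pres_eq R ==> pres_eq R ==> pres_eq R as cat_pres_eq_morphism.
Proof. by move=> u u' Eu v v' Ev; apply: pres_eq_cat. Qed.

Add Parametric Morphism X (R : word X -> Prop) (l : letter X) : (cons l)
  with signature pres_eq R ==> pres_eq R as cons_pres_eq_morphism.
Proof. by move=> u v; apply: (pres_eq_catl [:: l]). Qed.

Section PresentationGroup.
Variables (X : Type) (R : word X -> Prop).
Notation "u ~= v" := (pres_eq R u v) (at level 70).

Lemma pres_eq_cancel x b : [:: (x, b); (x, ~~ b)] ~= [::].
Proof. exact: (pe_cancel R [::] [::]). Qed.

Lemma pres_eq_relator r : R r -> r ~= [::].
Proof. by move=> Rr; have := pe_rel [::] [::] Rr; rewrite /= cats0. Qed.

Lemma catwV w : w ++ winv w ~= [::].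
Proof.
elim: w => [|[x b] w IH] /=; first reflexivity.
rewrite winv_cons -(cat1s (x, b)) catA -(catA [:: _]) IH.
exact: pres_eq_cancel.
Qed.

Lemma catVw w : winv w ++ w ~= [::].
Proof. by rewrite -{2}(winvK w); apply: catwV. Qed.

Lemma pres_eq_winv u v : u ~= v -> winv u ~= winv v.
Proof.
move=> E; transitivity (winv u ++ v ++ winv v).
  by rewrite catwV cats0; reflexivity.
transitivity (winv u ++ u ++ winv v).
  by apply/pres_eq_catl/pres_eq_catr; symmetry.
by rewrite catA catVw; reflexivity.
Qed.

Lemma pres_eq_solve u v w : u ++ winv v ~= w -> u ~= w ++ v.
Proof. by move<-; rewrite -catA catVw cats0; reflexivity. Qed.

Definition central (c : word X) := forall v, v ++ c ~= c ++ v.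

Lemma central_letters c :
  (forall x, (x, false) :: c ~= c ++ [:: (x, false)]) -> central c.
Proof.
move=> Hc v; elim: v => [|[x b] v IH] /=; first by rewrite cats0; reflexivity.
have Cx : (x, b) :: c ~= c ++ [:: (x, b)].
  case: b; last exact: Hc.
  transitivity ((x, true) :: (c ++ [:: (x, false)]) ++ [:: (x, true)]).
    rewrite -catA -{1}[(x, true) :: c]cats0; symmetry.
    exact: (pe_cancel R ((x, true) :: c) [::] x false).
  by rewrite -Hc; apply: (pe_cancel R [::] _ x true).
transitivity (((x, b) :: c) ++ v); first by rewrite IH; reflexivity.
by rewrite Cx -catA; reflexivity.
Qed.

Lemma central_winv c : central c -> central (winv c).
Proof.
move=> Cc v; rewrite -[v ++ _]cat0s -(catVw c) -catA (catA c) -Cc.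
by rewrite -!catA catwV cats0; reflexivity.
Qed.

Lemma pres_eq_flatten_map Y (f g : Y -> word X) ys :
  (forall y, f y ~= g y) -> flatten (map f ys) ~= flatten (map g ys).
Proof.
by move=> Efg; elim: ys => [|y ys IH] /=; [reflexivity | apply: pres_eq_cat].
Qed.

Lemma pres_eq_wpow u v c : u ~= v -> wpow u c ~= wpow v c.
Proof.
have Enseq n u' v' : u' ~= v' -> flatten (nseq n u') ~= flatten (nseq n v').
  by move=> E; elim: n => [|n IH] /=; [reflexivity | apply: pres_eq_cat].
by move=> E; case: c => n; apply: Enseq => //; apply: pres_eq_winv.
Qed.

End PresentationGroup.

Add Parametric Morphism X (R : word X -> Prop) : (@winv X)
  with signature pres_eq R ==> pres_eq R as winv_pres_eq_morphism.
Proof. exact: pres_eq_winv. Qed.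

Section Substitution.
Variables (Y X : Type).

Definition wsubst (g : Y -> word X) (w : word Y) : word X :=
  flatten [seq if l.2 then winv (g l.1) else g l.1 | l <- w].

Variable g : Y -> word X.

Lemma wsubst_cons l w :
  wsubst g (l :: w) = (if l.2 then winv (g l.1) else g l.1) ++ wsubst g w.
Proof. by []. Qed.

Lemma wsubst_cat u v : wsubst g (u ++ v) = wsubst g u ++ wsubst g v.
Proof. by rewrite /wsubst map_cat flatten_cat. Qed.

Lemma wsubst_letter y : wsubst g [:: (y, false)] = g y.
Proof. exact: cats0. Qed.

Lemma wsubst_winv w : wsubst g (winv w) = winv (wsubst g w).
Proof.
elim: w => [|[y b] w IH] //.
rewrite winv_cons wsubst_cat IH !wsubst_cons winv_cat /= cats0.
by case: b; rewrite ?winvK.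
Qed.

Lemma wsubst_flatten ws : wsubst g (flatten ws) = flatten (map (wsubst g) ws).
Proof. by elim: ws => //= w ws IH; rewrite wsubst_cat IH. Qed.

Lemma wsubst_wpow w c : wsubst g (wpow w c) = wpow (wsubst g w) c.
Proof.
have wsubst_nseq n v : wsubst g (flatten (nseq n v)) = flatten (nseq n (wsubst g v)).
  by rewrite wsubst_flatten map_nseq.
by case: c => n; rewrite /wpow wsubst_nseq ?wsubst_winv.
Qed.

End Substitution.

Lemma wsubst_comp Z Y X (g : Y -> word X) (h : Z -> word Y) w :
  wsubst g (wsubst h w) = wsubst (wsubst g \o h) w.
Proof.
elim: w => [|[z b] w IH] //.
by rewrite !wsubst_cons wsubst_cat IH; case: b; rewrite /= ?wsubst_winv.
Qed.

Lemma wsubst_unit X (w : word X) : wsubst (fun x => [:: (x, false)]) w = w.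
Proof. by elim: w => [|[x b] w IH] //; rewrite wsubst_cons IH; case: b. Qed.

Section SubstitutionPresentation.
Variables (Y X : Type) (R : word X -> Prop).
Notation "u ~= v" := (pres_eq R u v) (at level 70).

Lemma eq_wsubst (g h : Y -> word X) w :
  (forall y, g y ~= h y) -> wsubst g w ~= wsubst h w.
Proof.
move=> Egh; elim: w => [|[y b] w IH]; first reflexivity.
by rewrite !wsubst_cons IH; case: b; rewrite /= (Egh y); reflexivity.
Qed.

Lemma pres_eq_wsubst (RY : word Y -> Prop) (g : Y -> word X) u v :
  (forall r, RY r -> wsubst g r ~= [::]) ->
  pres_eq RY u v -> wsubst g u ~= wsubst g v.
Proof.
move=> Hg; elim=> {u v} [w|u v _ IH|u v w _ IH1 _ IH2|u v y b|u v r Rr].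
- reflexivity.
- by symmetry.
- by rewrite IH1.
- rewrite !wsubst_cat !wsubst_cons; apply: pres_eq_catl; rewrite catA.
  by case: b => /=; rewrite ?catVw ?catwV; reflexivity.
- by rewrite !wsubst_cat (Hg r Rr); reflexivity.
Qed.

End SubstitutionPresentation.

Lemma pres_eq_sub X (R R' : word X -> Prop) u v :
  (forall r, R r -> R' r) -> pres_eq R u v -> pres_eq R' u v.
Proof.
move=> RR'; elim=> [w|u1 v1 _|u1 v1 w1 _ IH1 _|u1 v1 x b|u1 v1 r Rr].
- exact: pe_refl.
- exact: pe_sym.
- exact: pe_trans IH1.
- exact: pe_cancel.
- exact/pe_rel/RR'.
Qed.

Lemma pres_eq_invariant X (R : word X -> Prop) T (g : word X -> T) :
  (forall u v x b, g (u ++ (x, b) :: (x, ~~ b) :: v) = g (u ++ v)) ->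
  (forall u v r, R r -> g (u ++ r ++ v) = g (u ++ v)) ->
  forall u v, pres_eq R u v -> g u = g v.
Proof. by move=> Hc Hr u v; elim=> [w|u1 v1 _ ->|u1 v1 w1 _ -> _ ->|*|*]; auto. Qed.

Definition add_relators X (R : word X -> Prop) Y (g : Y -> word X) r :=
  R r \/ exists y, r = g y.

Lemma pres_eq_add_central_relators X (R : word X -> Prop) Y (g : Y -> word X) u v :
  (forall y, central R (g y)) ->
  pres_eq (add_relators R g) u v -> exists l, pres_eq R u (v ++ wsubst g l).
Proof.
move=> Cg; elim=> {u v} [w|u v _ [l E]|u v w _ [l E] _ [l' E']|u v x b|u v r].
- by exists [::]; rewrite cats0; reflexivity.
- by exists (winv l); rewrite E wsubst_winv -catA catwV cats0; reflexivity.
- by exists (l' ++ l); rewrite E E' wsubst_cat catA; reflexivity.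
- by exists [::]; rewrite cats0; apply: pe_cancel.
case=> [Rr | [y ->]]; first by exists [::]; rewrite cats0; apply: pe_rel.
by exists [:: (y, false)]; rewrite wsubst_letter -catA -Cg; reflexivity.
Qed.

(** * Exponent sums *)

Section ExponentSum.
Local Open Scope ring_scope.
Variables (X : Type) (f : X -> int).

Definition exponent_sum (w : word X) : int := \sum_(l <- w) (-1) ^+ l.2 * f l.1.

Lemma exponent_sum_nil : exponent_sum [::] = 0.
Proof. exact: big_nil. Qed.

Lemma exponent_sum_cons l w :
  exponent_sum (l :: w) = (-1) ^+ l.2 * f l.1 + exponent_sum w.
Proof. exact: big_cons. Qed.

Lemma exponent_sum_cat u v :
  exponent_sum (u ++ v) = exponent_sum u + exponent_sum v.
Proof. exact: big_cat. Qed.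

Lemma exponent_sum_winv w : exponent_sum (winv w) = - exponent_sum w.
Proof.
rewrite /exponent_sum /winv big_rev big_map -sumrN.
by apply: eq_bigr => l _; rewrite signrN mulNr.
Qed.

Lemma exponent_sum_flatten ws :
  exponent_sum (flatten ws) = \sum_(w <- ws) exponent_sum w.
Proof.
elim: ws => [|w ws IH]; first by rewrite big_nil [LHS]big_nil.
by rewrite big_cons /= exponent_sum_cat IH.
Qed.

Lemma exponent_sum_wpow w c : exponent_sum (wpow w c) = c * exponent_sum w.
Proof.
have Enseq n v : exponent_sum (flatten (nseq n v)) = n%:Z * exponent_sum v.
  by rewrite exponent_sum_flatten big_nseq iter_addr_0 -mulr_natl natz.
by case: c => n; rewrite /wpow Enseq ?exponent_sum_winv // NegzE mulrN mulNr.
Qed.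

Lemma exponent_sum_letter x : exponent_sum [:: (x, false)] = f x.
Proof. by rewrite exponent_sum_cons exponent_sum_nil mul1r addr0. Qed.

Lemma exponent_sum_pres_eq (R : word X -> Prop) u v :
  (forall r, R r -> exponent_sum r = 0) ->
  pres_eq R u v -> exponent_sum u = exponent_sum v.
Proof.
move=> HR; apply: pres_eq_invariant => [u1 v1 x b|u1 v1 r Rr].
  by rewrite !exponent_sum_cat !exponent_sum_cons /= signrN mulNr addNKr.
by rewrite !exponent_sum_cat (HR r Rr) add0r.
Qed.

End ExponentSum.

Lemma eq_exponent_sum X (f g : X -> int) : f =1 g -> exponent_sum f =1 exponent_sum g.
Proof. by move=> Efg w; apply: eq_bigr => l _; rewrite Efg. Qed.

Lemma exponent_sum_wsubst Y X (f : X -> int) (g : Y -> word X) w :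
  exponent_sum f (wsubst g w) = exponent_sum (exponent_sum f \o g) w.
Proof.
elim: w => [|[y b] w IH]; first by rewrite !exponent_sum_nil.
rewrite wsubst_cons exponent_sum_cat IH exponent_sum_cons.
by case: b; rewrite /= ?exponent_sum_winv ?expr1 ?expr0 ?mulN1r ?mul1r.
Qed.

Lemma odd_count_pres_eq X (R : word X -> Prop) (p : pred X) u v :
  (forall r, R r -> ~~ odd (count (p \o fst) r)) ->
  pres_eq R u v -> odd (count (p \o fst) u) = odd (count (p \o fst) v).
Proof.
move=> HR; apply: (pres_eq_invariant (g := fun w => odd (count (p \o fst) w))).
  by move=> u1 v1 x b; rewrite !count_cat /= (addnA (p x)) addnn !oddD odd_double.
by move=> u1 v1 r Rr; rewrite !count_cat !oddD (negbTE (HR r Rr)).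
Qed.

Section AbelianWords.
Local Open Scope ring_scope.
Variable Y : eqType.

Lemma exponent_sum_indicator_notin (y : Y) b w :
  (y, ~~ b) \notin w ->
  exponent_sum (fun z => (z == y)%:Z) w = (-1) ^+ b * (count (fun l => l.1 == y) w)%:Z.
Proof.
elim: w => [|[z c] w IH]; first by rewrite exponent_sum_nil mulr0.
rewrite in_cons negb_or => /andP[yz /IH {}IH].
rewrite exponent_sum_cons IH /=.
case: (eqVneq z y) yz => [-> | _ _]; last by rewrite mulr0 add0r.
by rewrite xpair_eqE eqxx /= PoszD mulrDr; case: (b) c => [] [].
Qed.

Lemma wsubst_central_eq_nil X (R : word X -> Prop) (g : Y -> word X) w :
  (forall y, central R (g y)) ->
  (forall y, exponent_sum (fun z => (z == y)%:Z) w = 0) ->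
  pres_eq R (wsubst g w) [::].
Proof.
move=> Cg; have [n] := ubnP (size w); elim: n w => // n IH [|[y b] w] /= Hn Hw.
  reflexivity.
have: (y, ~~ b) \in w.
  (* otherwise every occurrence of y in (y, b) :: w has sign b *)
  apply: contraT => /exponent_sum_indicator_notin Ey; move: (Hw y).
  rewrite exponent_sum_cons Ey /= eqxx -mulrDr.
  by move/eqP; rewrite mulf_eq0 signr_eq0.
move=> yw; move: Hn Hw; case/splitPr: yw => w1 w2 Hn Hw.
have Cy c : central R (if c then winv (g y) else g y).
  by case: c; [apply: central_winv|].
transitivity ((if b then winv (g y) else g y) ++ (if ~~ b then winv (g y) else g y)
              ++ wsubst g (w1 ++ w2)).
  rewrite wsubst_cons !wsubst_cat wsubst_cons; apply: pres_eq_catl.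
  by rewrite !catA Cy; reflexivity.
have Ey : pres_eq R ((if b then winv (g y) else g y) ++
                     (if ~~ b then winv (g y) else g y)) [::].
  by case: (b); [apply: catVw | apply: catwV].
rewrite catA Ey /=; apply: IH; first by move: Hn; rewrite !size_cat /=; lia.
move=> z; rewrite -(Hw z) exponent_sum_cons !exponent_sum_cat exponent_sum_cons /=.
by rewrite signrN mulNr addrCA addNKr.
Qed.

End AbelianWords.

(** * Dihedral relations *)

Definition pairpow X (k : nat) (a b : X) : word X :=
  flatten (nseq k [:: (a, false); (b, false)]).

Section PairPower.
Variable X : Type.
Implicit Types (a b : X) (k : nat).

Lemma pairpowS k a b : pairpow k.+1 a b = pairpow k a b ++ [:: (a, false); (b, false)].
Proof. by rewrite /pairpow; elim: k => //= k ->. Qed.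

Lemma pairpowD k k' a b : pairpow (k + k') a b = pairpow k a b ++ pairpow k' a b.
Proof. by rewrite /pairpow nseqD flatten_cat. Qed.

Lemma pairpow_shift k a b : pairpow k a b ++ [:: (a, false)] = (a, false) :: pairpow k b a.
Proof. by rewrite /pairpow; elim: k => //= k ->. Qed.

Variable R : word X -> Prop.
Notation "u ~= v" := (pres_eq R u v) (at level 70).

Lemma involution_letterV a : [:: (a, false); (a, false)] ~= [::] ->
  [:: (a, true)] ~= [:: (a, false)].
Proof.
move=> Ea; transitivity ([:: (a, true)] ++ [:: (a, false); (a, false)]).
  by rewrite Ea; reflexivity.
exact: (pe_cancel R [::] [:: (a, false)] a true).
Qed.

Section Involutions.
Variables a b : X.
Hypotheses (Ea : [:: (a, false); (a, false)] ~= [::])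
           (Eb : [:: (b, false); (b, false)] ~= [::]).

Lemma winv_pairpow k : winv (pairpow k b a) ~= pairpow k a b.
Proof.
elim: k => [|k IH] /=; first reflexivity.
rewrite pairpowS winv_cat IH -[winv _ ++ _]/([:: (a, true)] ++ [:: (b, true)] ++ pairpow k a b).
by rewrite (involution_letterV Ea) (involution_letterV Eb); reflexivity.
Qed.

Lemma conj_pairpow k :
  winv (pairpow k b a) ++ (a, false) :: pairpow k b a ~= pairpow (k + k) a b ++ [:: (a, false)].
Proof. by rewrite winv_pairpow -pairpow_shift catA -pairpowD; reflexivity. Qed.

Lemma pairpow_eq_nil n :
  pairpow n a b ~= [::] <->
  pairpow (n./2 + n./2) a b ++ [:: (a, false)] ~= [:: (if odd n then b else a, false)].
Proof.
rewrite addnn; set k := n./2; have := odd_double_half n; rewrite -/k.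
case: (odd n) => /= <-; [rewrite add1n pairpowS | rewrite add0n]; split=> E.
- transitivity ((pairpow k.*2 a b ++ [:: (a, false)]) ++ [:: (b, false); (b, false)]).
    by rewrite Eb cats0; reflexivity.
  rewrite -catA (_ : [:: (a, false)] ++ _ = [:: (a, false); (b, false)] ++ [:: (b, false)]) //.
  by rewrite catA E; reflexivity.
- rewrite -[[:: (a, false); (b, false)]]/([:: (a, false)] ++ [:: (b, false)]).
  by rewrite catA E.
- by rewrite E; reflexivity.
- transitivity (pairpow k.*2 a b ++ [:: (a, false); (a, false)]).
    by rewrite Ea cats0; reflexivity.
  by rewrite -[[:: (a, false); _]]/([:: (a, false)] ++ [:: (a, false)]) catA E.
Qed.

End Involutions.
End PairPower.

Lemma wsubst_pairpow X Y (h : X -> Y) k a b :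
  wsubst (fun x => [:: (h x, false)]) (pairpow k a b) = pairpow k (h a) (h b).
Proof. by elim: k => // k IH; rewrite !pairpowS wsubst_cat IH. Qed.

Section IntKernel.
Local Open Scope ring_scope.

Lemma exists_int_left_kernel m n (M : 'M[int]_(m, n)) : (n < m)%N ->
  exists2 c : 'rV[int]_m, c != 0 & c *m M = 0.
Proof.
(* Clear the denominators of a nonzero rational vector in the left kernel. *)
move=> ltnm; pose MQ := map_mx (intr : int -> rat) M.
pose v := nz_row (kermx MQ).
have vMQ : v *m MQ = 0 by apply/sub_kermxP/nz_row_sub.
have v_neq0 : v != 0.
  by rewrite nz_row_eq0 -mxrank_eq0 mxrank_ker; have := rank_leq_col MQ; lia.
pose d := \prod_(k < m) denq (v 0 k).
have d_neq0 : d%:~R != 0 :> rat.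
  by rewrite intr_eq0; apply/prodf_neq0 => k _; apply: denq_neq0.
pose c := \row_j (numq (v 0 j) * \prod_(k < m | k != j) denq (v 0 k)).
have cE : map_mx intr c = d%:~R *: v.
  apply/rowP => j; rewrite [LHS]mxE [in LHS]mxE [RHS]mxE (@intrM rat) numqE /d.
  rewrite [in RHS](bigD1 j) //= (@intrM rat).
  by rewrite -mulrA mulrC.
exists c.
  apply: contraNneq v_neq0 => c0; move/eqP: cE; rewrite c0 map_mx0 eq_sym.
  by rewrite scaler_eq0 (negbTE d_neq0).
have /matrixP cMQ : map_mx intr (c *m M) = 0 :> 'M[rat]_(1, n).
  by rewrite map_mxM cE -scalemxAl vMQ scaler0.
by apply/matrixP => i j; move/eqP: (cMQ i j); rewrite !mxE intr_eq0 => /eqP.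
Qed.

End IntKernel.

(** * Coxeter groups and their adjoint groups *)

Section Coxeter.
Variables (S : finType) (m : S -> S -> nat).
Hypothesis Hm : coxeter_matrix m.
Local Notation "u ~=W v" := (pres_eq (cox_rel m) u v) (at level 70).

Lemma W_involution s : [:: (s, false); (s, false)] ~=W [::].
Proof. by apply: pres_eq_relator; exists s, s; case: Hm => -> _. Qed.

Lemma W_letterV s : [:: (s, true)] ~=W [:: (s, false)].
Proof. exact/involution_letterV/W_involution. Qed.

Lemma W_dihedral_conj s t : 0 < m s t ->
  winv (pairpow (m s t)./2 t s) ++ (s, false) :: pairpow (m s t)./2 t s
    ~=W [:: (if odd (m s t) then t else s, false)].
Proof.
move=> mst_gt0; have [Es Et] := (W_involution s, W_involution t).
rewrite (conj_pairpow Es Et); apply/(pairpow_eq_nil Es Et).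
by apply: pres_eq_relator; exists s, t.
Qed.

Lemma W_conj_trans x y z : W_conj m x y -> W_conj m y z -> W_conj m x z.
Proof.
move=> [w Exy] [v Eyz]; exists (w ++ v).
by rewrite Eyz Exy winv_cat -!catA; reflexivity.
Qed.

Definition odd_edge : rel S := fun s t => odd (m s t).

Lemma odd_edge_sym : connect_sym odd_edge.
Proof. by apply: sym_connect_sym => s t; rewrite /odd_edge; case: Hm => _ [->]. Qed.

Definition odd_root : S -> S := fingraph.root odd_edge.
Local Notation roots := (fingraph.roots odd_edge).

Definition class_count r (w : word S) := count ((fun s => odd_root s == r) \o fst) w.

Lemma odd_class_count_W r u v :
  u ~=W v -> odd (class_count r u) = odd (class_count r v).
Proof.
apply: odd_count_pres_eq => _ [s [t [_ ->]]].
rewrite -/(pairpow _ s t) -/(class_count r _).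
have -> k : class_count r (pairpow k s t) = k * ((odd_root s == r) + (odd_root t == r)).
  elim: k => // k IH.
  by rewrite pairpowS /class_count count_cat -/(class_count r _) IH /= addn0 mulSnr.
rewrite oddM; case mst: (odd (m s t)) => //=.
have -> : odd_root t = odd_root s by apply/esym/(fingraph.rootP odd_edge_sym)/connect1.
by rewrite addnn odd_double.
Qed.

Lemma W_conj_odd_edge s t : odd_edge s t -> W_conj m [:: (s, false)] [:: (t, false)].
Proof.
move=> st; have mst_gt0 : 0 < m s t by move: st; rewrite /odd_edge; case: (m s t).
by exists (pairpow (m s t)./2 t s); rewrite W_dihedral_conj // -/(odd_edge s t) st; reflexivity.
Qed.

Lemma W_conj_letters s t :
  W_conj m [:: (s, false)] [:: (t, false)] <-> connect odd_edge s t.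
Proof.
split=> [[w E] | /connectP[p path_p ->]].
  have := odd_class_count_W (odd_root t) E.
  rewrite /class_count /winv count_cat count_rev count_map /= eqxx addn0.
  rewrite addnCA addnn oddD odd_double /=.
  by case: (fingraph.rootP odd_edge_sym (x := s) (y := t)) => // /eqP/negbTE->.
elim: p s path_p => [|u p IH] s /=; first by exists [::]; reflexivity.
by case/andP=> /W_conj_odd_edge su /IH; apply: W_conj_trans.
Qed.

Lemma W_conj_odd_root s : W_conj m [:: (odd_root s, false)] [:: (s, false)].
Proof. by apply/W_conj_letters; rewrite odd_edge_sym; apply: connect_root. Qed.

Lemma odd_root_enum_val (i : 'I_#|roots|) :
  odd_root (enum_val i) = enum_val i.
Proof. exact/eqP/(enum_valP i). Qed.

Lemma num_Q_classes_odd_roots : num_Q_classes m #|roots|.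
Proof.
exists (fun i => [:: (enum_val i, false)]); split; [|split].
- by move=> i; exists [::], (enum_val i); reflexivity.
- move=> i j /W_conj_letters/(fingraph.rootP odd_edge_sym).
  by rewrite -/odd_root !odd_root_enum_val => /enum_val_inj.
- move=> x [w [s E]]; have rs := fingraph.roots_root odd_edge_sym s.
  exists (enum_rank_in rs (odd_root s)); rewrite enum_rankK_in //.
  by apply: W_conj_trans (W_conj_odd_root s) _; exists w.
Qed.

Local Notation Q := (Qgen m).
Local Notation "u ~=A v" := (pres_eq (@ad_rel S m) u v) (at level 70).

Lemma Qgen_winv (x : Q) : winv (sval x) ~=W sval x.
Proof.
case: x => q [w [s E]] /=; rewrite E winv_cat winv_cons winvK -catA.
by rewrite W_letterV; reflexivity.
Qed.

Lemma Qgen_sq (x : Q) : sval x ++ sval x ~=W [::].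
Proof.
transitivity (sval x ++ winv (sval x)); first by rewrite Qgen_winv; reflexivity.
exact: catwV.
Qed.

Lemma inQ_sandwich (x y : Q) : inQ m (sval y ++ sval x ++ sval y).
Proof.
case: x => q [w [s E]] /=; exists (w ++ sval y), s.
by rewrite -{1}Qgen_winv E winv_cat -!catA; reflexivity.
Qed.

Lemma Ad_gen_eq (x y : Q) b : sval x ~=W sval y -> [:: (x, b)] ~=A [:: (y, b)].
Proof.
move=> Exy; have Ex : [:: (x, false)] ~=A [:: (y, false)].
  apply: (@pres_eq_solve _ _ _ [:: (y, false)] [::]).
  by apply: pres_eq_relator; left; exists x, y.
by case: b => //; apply: pres_eq_winv Ex.
Qed.

Lemma Ad_conj (x y z : Q) : sval z ~=W sval y ++ sval x ++ sval y ->
  [:: (y, true); (x, false); (y, false)] ~=A [:: (z, false)].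
Proof.
move=> Ez; apply: (@pres_eq_solve _ _ _ [:: (z, false)] [::]).
by apply: pres_eq_relator; right; exists x, y, z.
Qed.

Lemma Ad_conjV (x y z : Q) : sval z ~=W sval y ++ sval x ++ sval y ->
  [:: (y, false); (x, false); (y, true)] ~=A [:: (z, false)].
Proof.
move=> Ez; have Ex : sval x ~=W sval y ++ sval z ++ sval y.
  by rewrite Ez !catA Qgen_sq -catA Qgen_sq cats0; reflexivity.
rewrite -[[:: (y, false); _; _]]/([:: (y, false)] ++ [:: (x, false)] ++ [:: (y, true)]).
rewrite -(Ad_conj Ex) /=.
exact: pe_trans (pe_cancel _ [::] _ y false) (pe_cancel _ [:: (z, false)] [::] y false).
Qed.

Lemma inQ_letter s : inQ m [:: (s, false)].
Proof. by exists [::], s; reflexivity. Qed.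

Definition gen s : Q := exist _ [:: (s, false)] (inQ_letter s).

Definition lift : word S -> word Q := wsubst (fun s => [:: (gen s, false)]).

Lemma Ad_conj_lift w (x z : Q) : sval z ~=W winv w ++ sval x ++ w ->
  winv (lift w) ++ (x, false) :: lift w ~=A [:: (z, false)].
Proof.
elim: w x => [|[s b] w IH] x Ez; first by apply: Ad_gen_eq; rewrite Ez cats0; reflexivity.
pose y : Q := exist _ _ (inQ_sandwich x (gen s)).
set L := if b then winv [:: (gen s, false)] else [:: (gen s, false)].
have Ey : winv L ++ (x, false) :: L ~=A [:: (y, false)].
  by rewrite /L; case: (b); [apply: Ad_conjV | apply: Ad_conj]; reflexivity.
transitivity (winv (lift w) ++ (winv L ++ (x, false) :: L) ++ lift w).
  by rewrite /lift wsubst_cons winv_cat -!catA; reflexivity.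
rewrite Ey; apply: IH; rewrite Ez winv_cons -!catA; apply: pres_eq_catl.
have Es c : [:: (s, c)] ~=W [:: (s, false)] by case: c; [apply: W_letterV | reflexivity].
by rewrite -(cat1s _ w) -(cat1s (s, ~~ b)) (Es b) (Es (~~ b)); reflexivity.
Qed.

Definition sq (x : Q) : word Q := [:: (x, false); (x, false)].

Lemma central_sq (x : Q) : central (@ad_rel S m) (sq x).
Proof.
(* conjugating twice by e_x sends e_y to e_(x x y x x) = e_y *)
apply: central_letters => y.
pose xyx : Q := exist _ _ (inQ_sandwich y x).
pose xxyxx : Q := exist _ _ (inQ_sandwich xyx x).
have Ey : [:: (x, true); (x, true); (y, false); (x, false); (x, false)] ~=A [:: (y, false)].
  have -> : [:: (x, true); (x, true); (y, false); (x, false); (x, false)] =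
            [:: (x, true)] ++ [:: (x, true); (y, false); (x, false)] ++ [:: (x, false)] by [].
  rewrite (Ad_conj (z := xyx)); last reflexivity.
  rewrite /= (Ad_conj (z := xxyxx)); last reflexivity.
  by apply: Ad_gen_eq; rewrite /= !catA Qgen_sq -catA Qgen_sq cats0; reflexivity.
symmetry; rewrite -Ey /sq /=.
exact: pe_trans (pe_cancel _ [:: (x, false)] _ x false) (pe_cancel _ [::] _ x false).
Qed.

Lemma sq_gen_conj s t :
  W_conj m [:: (s, false)] [:: (t, false)] -> sq (gen t) ~=A sq (gen s).
Proof.
case=> w /(Ad_conj_lift (x := gen s) (z := gen t)) Et.
rewrite /sq -[[:: (gen t, false); _]]/([:: (gen t, false)] ++ [:: (gen t, false)]) -Et.
rewrite -catA cat_cons catA catwV /= -[_ :: _ :: lift w]/(sq (gen s) ++ lift w).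
by rewrite catA central_sq -catA catVw cats0; reflexivity.
Qed.

Definition sq_word : word S -> word Q := wsubst (fun s => sq (gen s)).

(* Ad(Q_W) modulo the central subgroup generated by the squares e_s^2. *)
Local Notation "u ~=Asq v" :=
  (pres_eq (add_relators (@ad_rel S m) (fun s => sq (gen s))) u v) (at level 70).

Lemma Ad_eq_mod_sq u v : u ~=A v -> u ~=Asq v.
Proof. by apply: pres_eq_sub => r Rr; left. Qed.

Lemma lift_W_eq u v : u ~=W v -> lift u ~=Asq lift v.
Proof.
apply: pres_eq_wsubst => _ [s [t [mst_gt0 ->]]].
(* the e_s are involutions modulo squares, so the dihedral relation of W lifts *)
have Egen r : [:: (gen r, false); (gen r, false)] ~=Asq [::].
  by apply: pres_eq_relator; right; exists r.
rewrite -/(pairpow _ s t) wsubst_pairpow; apply/(pairpow_eq_nil (Egen s) (Egen t)).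
rewrite -(conj_pairpow (Egen s) (Egen t)) -wsubst_pairpow -/lift.
have -> : (if odd (m s t) then gen t else gen s) = gen (if odd (m s t) then t else s).
  by case: odd.
by apply/Ad_eq_mod_sq/Ad_conj_lift; symmetry; apply: W_dihedral_conj.
Qed.

Lemma gen_eq_lift (x : Q) : [:: (x, false)] ~=Asq lift (sval x).
Proof.
have [w [s Ex]] := svalP x.
rewrite (lift_W_eq Ex) /lift wsubst_cat wsubst_winv wsubst_cons /=.
by symmetry; apply/Ad_eq_mod_sq/Ad_conj_lift.
Qed.

Lemma eq_lift_phi u : u ~=Asq lift (phi u).
Proof.
have -> : phi u = wsubst (fun x : Q => sval x) u by [].
rewrite /lift wsubst_comp -[X in X ~=Asq _](wsubst_unit u).
by apply: eq_wsubst => x; apply: gen_eq_lift.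
Qed.

Lemma inC_sq_word u : inC u -> exists l, u ~=A sq_word l.
Proof.
move=> Cu; have : u ~=Asq [::] by rewrite (eq_lift_phi u) (lift_W_eq Cu); reflexivity.
by case/pres_eq_add_central_relators=> [s | l]; [apply: central_sq | exists l].
Qed.

Local Open Scope ring_scope.

Lemma sq_word_eq_nil l :
  (forall r, exponent_sum (fun s => (odd_root s == r)%:Z) l = 0) ->
  sq_word l ~=A [::].
Proof.
move=> Hl; transitivity (sq_word (wsubst (fun s => [:: (odd_root s, false)]) l)).
  rewrite /sq_word wsubst_comp; apply: eq_wsubst => s /=; rewrite wsubst_letter.
  exact/sq_gen_conj/W_conj_odd_root.
apply: wsubst_central_eq_nil => [s | r]; first exact: central_sq.
rewrite exponent_sum_wsubst -(Hl r).
by apply: eq_exponent_sum => s /=; rewrite exponent_sum_letter.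
Qed.

Definition class_parity r (x : Q) : int := odd (class_count r (sval x)).

Lemma exponent_sum_class_parity r u v :
  u ~=A v -> exponent_sum (class_parity r) u = exponent_sum (class_parity r) v.
Proof.
apply: exponent_sum_pres_eq => _ [[x [y [Exy ->]]] | [x [y [z [Ez ->]]]]].
  rewrite !exponent_sum_cons exponent_sum_nil /class_parity (odd_class_count_W r Exy).
  by case: (odd _) => /=; lia.
rewrite !exponent_sum_cons exponent_sum_nil /class_parity (odd_class_count_W r Ez).
by rewrite /class_count !count_cat !oddD; case: (odd _); case: (odd _) => /=; lia.
Qed.

Lemma C_indep_sq_roots : C_indep (fun i : 'I_#|roots| => sq (gen (enum_val i))).
Proof.
split=> [i | c E i]; first exact: W_involution.
move/(exponent_sum_class_parity (enum_val i)): E.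
have Esq j : exponent_sum (class_parity (enum_val i)) (wpow (sq (gen (enum_val j))) (c j))
             = c j *+ 2 *+ (j == i).
  rewrite exponent_sum_wpow /sq !exponent_sum_cons exponent_sum_nil /class_parity /=.
  rewrite odd_root_enum_val (inj_eq enum_val_inj); case: (j == i); lia.
rewrite exponent_sum_nil exponent_sum_flatten big_map.
rewrite (eq_bigr _ (fun j _ => Esq j)) (bigD1_seq i) ?mem_enum ?enum_uniq //= eqxx.
by rewrite big1 => [|j /negbTE->]; lia.
Qed.

Lemma C_indep_card_bound k (u : 'I_k -> word Q) : C_indep u -> (k <= #|roots|)%N.
Proof.
move=> [Cu indep]; rewrite leqNgt; apply/negP => ltk.
have /fin_all_exists[l Hl] i : exists l, u i ~=A sq_word l.
  exact: inC_sq_word.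
pose M : 'M[int]_(k, #|roots|) :=
  \matrix_(i, j) exponent_sum (fun s => (odd_root s == enum_val j)%:Z) (l i).
have [c c_neq0 cM] := exists_int_left_kernel M ltk.
suff c0 : forall i, c 0 i = 0 by move/eqP: c_neq0; apply; apply/rowP => i; rewrite c0 mxE.
apply: indep.
transitivity (sq_word (flatten [seq wpow (l i) (c 0 i) | i <- enum 'I_k])).
  rewrite /sq_word wsubst_flatten -map_comp; apply: pres_eq_flatten_map => i /=.
  by rewrite wsubst_wpow; apply: pres_eq_wpow.
apply: sq_word_eq_nil => r; rewrite exponent_sum_flatten big_map big_enum /=.
under eq_bigr => i _ do rewrite exponent_sum_wpow.
have [r_root | r_nroot] := boolP (r \in roots).
  move/rowP/(_ (enum_rank_in r_root r)): cM; rewrite !mxE => cM; rewrite -[RHS]cM.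
  by apply: eq_bigr => i _; rewrite mxE enum_rankK_in.
rewrite big1 // => i _; rewrite [exponent_sum _ _]big1 ?mulr0 // => -[s b] _ /=.
suff /negbTE-> : odd_root s != r by rewrite mulr0.
by apply: contraNneq r_nroot => <-; exact: (fingraph.roots_root odd_edge_sym s).
Qed.

End Coxeter.

Theorem proposition3p2 (S : finType) (m : S -> S -> nat) :
  coxeter_matrix m ->
  exists n : nat, num_Q_classes m n /\ C_rank_eq m n.
Proof.
move=> Hm; exists #|fingraph.roots (odd_edge m)|; split.
  exact: num_Q_classes_odd_roots.
split; first by eexists; apply: C_indep_sq_roots.
by move=> u /(C_indep_card_bound Hm); rewrite ltnn.
Qed.
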